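(* Let $M$ be a finite set of alternatives, $\mathcal{R}$ the set of all weak preference orders on $M$, and $\varphi:\mathcal{R}\to\Delta(M)$ a deterministic mechanism, i.e., for every $R\in\mathcal{R}$ the lottery $\varphi(R)$ puts probability $1$ on a single alternative. Then $\varphi$ is strategyproof if and only if it is separation monotonic.
   Context: A preference order is a complete, transitive binary relation $R$ on $M$; $a\,I\,b$ means $a\,R\,b$ and $b\,R\,a$, $a\,P\,b$ means $a\,R\,b$ but not $b\,R\,a$. Every preference order is written $M_1\,P\,\cdots\,P\,M_K$ with $(M_k)$ the partition of $M$ into nonempty indifference classes, ordered so that $a\,P\,b$ whenever $a\in M_k$, $b\in M_{k'}$, $k<k'$. A mechanism is a map $\varphi:\mathcal{R}\to\Delta(M)$; for $A\subseteq M$, $\varphi_A(R)=\sum_{a\in A}(\varphi(R))_a$. A lottery $x$ first order-stochastically dominates $y$ at $R$ if $\sum_{j:\, j R a}x_j\ge\sum_{j:\, j R a}y_j$ for every $a\in M$. $\varphi$ is strategyproof if for all $R,R'\in\mathcal{R}$, $\varphi(R)$ first order-stochastically dominates $\varphi(R')$ at $R$. A separation is a pair $(R,R')$ such that, with $R=M_1\,P\,\cdots\,P\,M_K$, there are $\kappa\in\{1,\dots,K\}$ and a partition of $M_\kappa$ into disjoint nonempty $M_\kappa^1,M_\kappa^2$ with $R'=M_1\,P'\,\cdots\,P'\,M_{\kappa-1}\,P'\,M_\kappa^1\,P'\,M_\kappa^2\,P'\,M_{\kappa+1}\,P'\,\cdots\,P'\,M_K$ (indifference within each listed set). $\varphi$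 is separation monotonic if for every separation $(R,R')$: (responsiveness) $\varphi_{M_\kappa^1}(R')\ge\varphi_{M_\kappa^1}(R)$ and $\varphi_{M_\kappa^2}(R')\le\varphi_{M_\kappa^2}(R)$; and (directness) if $\varphi_{M_k}(R)\ne\varphi_{M_k}(R')$ for some $k\in\{1,\dots,K\}$, then $\varphi_{M_\kappa^1}(R')\ne\varphi_{M_\kappa^1}(R)$ and $\varphi_{M_\kappa^2}(R')\ne\varphi_{M_\kappa^2}(R)$. *)

From HB Require Import structures.
From mathcomp Require Import all_boot all_order all_algebra.
Set Implicit Arguments. Unset Strict Implicit. Unset Printing Implicit Defensive.
Import Order.TTheory GRing.Theory Num.Theory.
Local Open Scope ring_scope.

(* A binary relation on the finite set M of alternatives, encoded as a finite
   function so that equality of relations is extensional. [rel_of r a b] means a R b. *)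
Definition prel (M : finType) := {ffun M * M -> bool}.
Definition rel_of (M : finType) (r : prel M) (a b : M) : bool := r (a, b).

Definition complete_rel (M : finType) (r : prel M) : Prop :=
  forall a b : M, rel_of r a b || rel_of r b a.
Definition transitive_rel (M : finType) (r : prel M) : Prop :=
  forall a b c : M, rel_of r a b -> rel_of r b c -> rel_of r a c.
Definition is_pref (M : finType) (r : prel M) : Prop :=
  complete_rel r /\ transitive_rel r.

Definition indiff (M : finType) (r : prel M) (a b : M) : bool :=
  rel_of r a b && rel_of r b a.

Definition indiff_class (M : finType) (r : prel M) (C : {set M}) : Prop :=
  exists a : M, C = [set b | indiff r a b].

Definition is_lottery (R : realFieldType) (M : finType) (x : {ffun M -> R}) : Prop :=
  (forall a, 0 <= x a) /\ \sum_(a : M) x a = 1.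

(* A mechanism phi : prel M -> {ffun M -> R}, only its values on preference
   orders matter; it maps each preference order to a lottery. *)
Definition is_mechanism (R : realFieldType) (M : finType)
    (phi : prel M -> {ffun M -> R}) : Prop :=
  forall r : prel M, is_pref r -> is_lottery (phi r).

Definition deterministic (R : realFieldType) (M : finType)
    (phi : prel M -> {ffun M -> R}) : Prop :=
  forall r : prel M, is_pref r -> exists a : M, phi r a = 1.

Definition mass (R : realFieldType) (M : finType) (x : {ffun M -> R}) (A : {set M}) : R :=
  \sum_(a in A) x a.

Definition fosd (R : realFieldType) (M : finType) (r : prel M) (x y : {ffun M -> R}) : Prop :=
  forall a : M, \sum_(j | rel_of r j a) y j <= \sum_(j | rel_of r j a) x j.

Definition strategyproof (R : realFieldType) (M : finType)
    (phi : prel M -> {ffun M -> R}) : Prop :=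
  forall r r' : prel M, is_pref r -> is_pref r' -> fosd r (phi r) (phi r').

(* Given r and a partition C1, C2 of an indifference class M_kappa of r, the relation
   r' = M_1 P' ... P' M_kappa^1 P' M_kappa^2 P' ... P' M_K : r' agrees with r
   unless both alternatives lie in M_kappa, in which case a r' b iff
   a in M_kappa^1 or b in M_kappa^2. *)
Definition separate (M : finType) (r : prel M) (C1 C2 : {set M}) : prel M :=
  [ffun p : M * M =>
     if (p.1 \in C1 :|: C2) && (p.2 \in C1 :|: C2)
     then (p.1 \in C1) || (p.2 \in C2)
     else r p].

Definition separation (M : finType) (r r' : prel M) (C1 C2 : {set M}) : Prop :=
  [/\ is_pref r, indiff_class r (C1 :|: C2), [disjoint C1 & C2],
      (C1 != set0) && (C2 != set0) & r' = separate r C1 C2].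

Definition separation_monotonic (R : realFieldType) (M : finType)
    (phi : prel M -> {ffun M -> R}) : Prop :=
  forall (r r' : prel M) (C1 C2 : {set M}), separation r r' C1 C2 ->
    (mass (phi r) C1 <= mass (phi r') C1 /\ mass (phi r') C2 <= mass (phi r) C2) /\
    ((exists C : {set M}, indiff_class r C /\ mass (phi r) C != mass (phi r') C) ->
       mass (phi r') C1 != mass (phi r) C1 /\ mass (phi r') C2 != mass (phi r) C2).

(* For a deterministic mechanism, phi r is the point mass at some alternative f r.
   Strategyproofness says f r R f r' for all r, r'; for point masses, separation
   monotonicity says that along a separation (r, r') the outcomes f r and f r' stay
   r-indifferent and can move only as responsiveness allows.  Strategyproofness gives
   this at once, since f r R f r' and f r' R' f r.
   Conversely, any refinement r' of r is a chain of separations, so f r and f r' are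
   r-indifferent.  Let x = f q.  Splitting x off its q-class keeps x chosen; coarsening
   to "better than x, x, worse than x" keeps it chosen since x is now alone in its class;
   merging the top two tiers and splitting them again with x first keeps it chosen by
   responsiveness twice.  So x is chosen when ranked alone on top.  For any r, let U be
   the r-upper contour set of x: the order "x, then U, then the rest" refines both
   "x on top" and "U above the rest", and so does r, so f r lies in U, i.e. f r R x. *)

From mathcomp Require Import all_boot all_order all_algebra.
Set Implicit Arguments. Unset Strict Implicit. Unset Printing Implicit Defensive.
Import GRing.Theory Num.Theory.
Local Open Scope ring_scope.

Section Preferences.
Variable M : finType.
Implicit Types (c d r : prel M) (A B C : {set M}) (u v w x y : M).

Lemma pref_refl c x : is_pref c -> rel_of c x x.
Proof. by case=> total _; have := total x x; rewrite orbb. Qed.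

Lemma indiff_refl c x : is_pref c -> indiff c x x.
Proof. by move=> c_pref; rewrite /indiff pref_refl. Qed.

Lemma indiff_sym c u v : indiff c u v = indiff c v u.
Proof. by rewrite /indiff andbC. Qed.

Lemma indiff_trans c u v w : is_pref c -> indiff c u v -> indiff c v w -> indiff c u w.
Proof.
case=> _ tr /andP[uv vu] /andP[vw wv].
by apply/andP; split; [apply: tr uv vw | apply: tr wv vu].
Qed.

Lemma subrel_indiff c d u v : subrel (rel_of d) (rel_of c) -> indiff d u v -> indiff c u v.
Proof. by move=> dc /andP[uv vu]; apply/andP; split; apply: dc. Qed.

Lemma class_mem c C u v : is_pref c -> indiff_class c C -> u \in C ->
  (v \in C) = indiff c u v.
Proof.
move=> c_pref [a ->]; rewrite !inE => au; apply/idP/idP => [av | uv].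
  by apply: indiff_trans c_pref _ av; rewrite indiff_sym.
exact: indiff_trans c_pref au uv.
Qed.

Lemma class_between c C x y w : is_pref c -> indiff_class c C -> x \in C -> w \in C ->
  rel_of c x y -> rel_of c y w -> y \in C.
Proof.
move=> c_pref C_class xC wC xy yw; rewrite (class_mem _ c_pref C_class xC).
have /andP[_ wx] : indiff c x w by rewrite -(class_mem _ c_pref C_class xC).
by case: c_pref => _ tr; rewrite /indiff xy (tr _ _ _ yw wx).
Qed.

Lemma separateE c C1 C2 u v : rel_of (separate c C1 C2) u v =
  if (u \in C1 :|: C2) && (v \in C1 :|: C2) then (u \in C1) || (v \in C2)
  else rel_of c u v.
Proof. by rewrite /rel_of ffunE. Qed.

Section Separate.
Variables (c : prel M) (C1 C2 : {set M}).
Hypotheses (c_pref : is_pref c) (C_class : indiff_class c (C1 :|: C2)).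
Hypothesis C_dis : [disjoint C1 & C2].

Let memC2 w : w \in C1 :|: C2 -> (w \in C2) = (w \notin C1).
Proof.
rewrite inE; case/orP=> [wC1 | wC2]; first by rewrite (disjointFr C_dis wC1) wC1.
by rewrite wC2 (disjointFl C_dis wC2).
Qed.

Lemma separate_subrel : subrel (rel_of (separate c C1 C2)) (rel_of c).
Proof.
move=> u v; rewrite separateE; case: ifP => // /andP[uC vC] _.
by have /andP[] : indiff c u v by rewrite -(class_mem _ c_pref C_class uC).
Qed.

Lemma separate_pref : is_pref (separate c C1 C2).
Proof.
split=> [u v | x y w xy yw].
  rewrite !separateE [(v \in _) && _]andbC.
  case: ifP => [/andP[uC vC] | _]; last by case: c_pref => total _; apply: total.
  by rewrite !memC2 //; case: (u \in C1); case: (v \in C1).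
rewrite separateE; case: ifP => [/andP[xC wC] | _]; last first.
  by case: c_pref => _ tr; apply: tr (separate_subrel xy) (separate_subrel yw).
have yC := class_between c_pref C_class xC wC (separate_subrel xy) (separate_subrel yw).
move: xy yw; rewrite !separateE xC yC wC /= !memC2 //.
by case: (x \in C1); case: (y \in C1); case: (w \in C1).
Qed.

Lemma separate_indiff_mem u v : indiff (separate c C1 C2) u v -> u \in C1 :|: C2 ->
  (u \in C1) = (v \in C1) /\ (u \in C2) = (v \in C2).
Proof.
move=> uv uC; have vC : v \in C1 :|: C2.
  by rewrite (class_mem _ c_pref C_class uC); apply: subrel_indiff separate_subrel uv.
move: uv; rewrite /indiff !separateE uC vC /= !memC2 //.
by case: (u \in C1); case: (v \in C1).
Qed.

Lemma separate_id : (C1 == set0) || (C2 == set0) -> separate c C1 C2 = c.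
Proof.
move=> C0; apply/ffunP => -[u v]; change (rel_of (separate c C1 C2) u v = rel_of c u v).
rewrite separateE; case: ifP => // /andP[uC vC].
have /andP[-> _] : indiff c u v by rewrite -(class_mem _ c_pref C_class uC).
case/orP: C0 => /eqP C0; move: uC vC; rewrite C0 ?set0U ?setU0 => uC vC.
  by rewrite vC orbT.
by rewrite uC.
Qed.

End Separate.

Lemma class_indiff_mem c C u v : is_pref c -> indiff_class c C -> indiff c u v ->
  (u \in C) = (v \in C).
Proof.
move=> c_pref C_class uv; apply/idP/idP => [uC | vC].
  by rewrite (class_mem _ c_pref C_class uC).
by rewrite (class_mem _ c_pref C_class vC) indiff_sym.
Qed.

Lemma separation_pref c d C1 C2 : separation c d C1 C2 -> is_pref d.
Proof. by case=> c_pref C_class C_dis _ ->; apply: separate_pref. Qed.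

Lemma separation_subrel c d C1 C2 : separation c d C1 C2 -> subrel (rel_of d) (rel_of c).
Proof. by case=> c_pref C_class _ _ ->; apply: separate_subrel. Qed.

Lemma separation_card c d C1 C2 : separation c d C1 C2 ->
  (#|[set p | d p]| < #|[set p | c p]|)%N.
Proof.
move=> sep; case: (sep) => c_pref C_class C_dis /andP[/set0Pn[z zC1] /set0Pn[y yC2]] ->.
have yC : y \in C1 :|: C2 by rewrite inE yC2 orbT.
have zC : z \in C1 :|: C2 by rewrite inE zC1.
apply: proper_card; apply/properP; split.
  by apply/subsetP => -[u v]; rewrite !inE; apply: separate_subrel.
exists (y, z); rewrite inE.
  by have /andP[] : indiff c y z by rewrite -(class_mem _ c_pref C_class yC).
rewrite -/(rel_of _ y z) separateE yC zC (disjointFl C_dis yC2) (disjointFr C_dis zC1).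
by [].
Qed.

Lemma separation_indiff_mem r r' C1 C2 a b : separation r r' C1 C2 ->
  rel_of r a b -> rel_of r' b a ->
  [/\ indiff r a b, a \in C1 -> b \in C1 & b \in C2 -> a \in C2].
Proof.
move=> sep ab ba.
have ab_indiff : indiff r a b by rewrite /indiff ab (separation_subrel sep ba).
case: sep ba => r_pref C_class C_dis _ -> ba.
have mem_ab := class_indiff_mem r_pref C_class ab_indiff.
split=> // [aC1 | bC2].
  have aC : a \in C1 :|: C2 by rewrite inE aC1.
  by move: ba; rewrite separateE aC -mem_ab aC (disjointFr C_dis aC1) orbF.
have bC : b \in C1 :|: C2 by rewrite inE bC2 orbT.
by move: ba; rewrite separateE bC mem_ab bC (disjointFl C_dis bC2).
Qed.

Lemma subrel_separation c c' : is_pref c -> is_pref c' -> subrel (rel_of c') (rel_of c) ->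
  c != c' -> exists d C1 C2, separation c d C1 C2 /\ subrel (rel_of c') (rel_of d).
Proof.
move=> c_pref [c'_total c'_tr] c'c neq.
have [[y z] /andP[cyz c'yzN] | c_eq] := pickP [pred p | c p && ~~ c' p]; last first.
  case/eqP: neq; apply/ffunP => -[u v]; have := c_eq (u, v); have := c'c u v.
  by rewrite /rel_of /=; case: (c (u, v)); case: (c' (u, v)) => // ->.
have c'zy : rel_of c' z y by have := c'_total y z; rewrite /rel_of (negbTE c'yzN).
pose C := [set w | indiff c z w].
pose C1 := [set w in C | rel_of c' w z]; pose C2 := [set w in C | ~~ rel_of c' w z].
have CE : C1 :|: C2 = C by apply/setP => w; rewrite !inE -andb_orr orbN andbT.
have C_dis : [disjoint C1 & C2].
  by rewrite -setI_eq0; apply/eqP/setP => w; rewrite !inE andbACA andbN andbF.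
exists (separate c C1 C2), C1, C2; split.
  split=> //; first by rewrite CE; exists z.
  apply/andP; split; apply/set0Pn; [exists z | exists y]; rewrite !inE.
    by rewrite indiff_refl // (pref_refl _ (conj c'_total c'_tr)).
  by rewrite /indiff (c'c _ _ c'zy) c'yzN /= andbT; exact: cyz.
move=> u v c'uv; rewrite separateE CE; case: ifP => [/andP[uC vC] | _]; last exact: c'c.
move: uC vC; rewrite !inE => -> -> /=.
case: (boolP (rel_of c' v z)) => [vz | _]; last by rewrite orbT.
by rewrite (c'_tr _ _ _ c'uv vz).
Qed.

Definition prefer A : prel M := [ffun p => (p.1 \in A) || (p.2 \notin A)].

Lemma preferE A u v : rel_of (prefer A) u v = (u \in A) || (v \notin A).
Proof. by rewrite /rel_of ffunE. Qed.

Lemma prefer_pref A : is_pref (prefer A).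
Proof.
split=> [u v | u v w]; rewrite !preferE.
  by case: (u \in A); case: (v \in A).
by case: (u \in A); case: (v \in A); case: (w \in A).
Qed.

Lemma indiff_prefer A u v : indiff (prefer A) u v = ((u \in A) == (v \in A)).
Proof. by rewrite /indiff !preferE; case: (u \in A); case: (v \in A). Qed.

Lemma prefer_class A x : x \in A -> indiff_class (prefer A) A.
Proof.
by move=> xA; exists x; apply/setP => y; rewrite inE indiff_prefer xA eq_sym eqb_id.
Qed.

Lemma subrel_prefer_upper c x : is_pref c ->
  subrel (rel_of c) (rel_of (prefer [set y | rel_of c y x])).
Proof.
case=> _ tr u v uv; rewrite preferE !inE orbC -implybE; apply/implyP; exact: tr uv.
Qed.

Lemma subrel_prefer1 B x : x \in B ->
  subrel (rel_of (separate (prefer B) [set x] (B :\ x))) (rel_of (prefer [set x])).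
Proof.
move=> xB u v; rewrite separateE setD1K // !preferE !inE.
case: (eqVneq v x) => [-> | _]; last by rewrite /= orbT.
by rewrite xB andbT /= !orbF; case: ifP => // ->.
Qed.

Lemma subrel_isolated c x : is_pref c -> (forall y, indiff c x y -> y = x) ->
  let B := [set y | rel_of c y x] in
  subrel (rel_of c) (rel_of (separate (prefer B) (B :\ x) [set x])).
Proof.
move=> c_pref x_iso B u v uv; have xB : x \in B by rewrite inE pref_refl.
rewrite separateE setUC setD1K //; case: ifP => [/andP[uB vB] | _].
  rewrite in_setD1 in_set1 uB andbT; have [ux | //] := eqVneq u x.
  by rewrite (x_iso v) ?eqxx ?orbT //; move: uv vB; rewrite ux inE /indiff => -> ->.
exact: (subrel_prefer_upper x c_pref uv).
Qed.

Lemma prefer_class_split B x : x \in B -> indiff_class (prefer B) ([set x] :|: (B :\ x)).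
Proof. by move=> xB; rewrite setD1K //; apply: prefer_class xB. Qed.

End Preferences.

Section Lotteries.
Context {R : realFieldType} {M : finType}.

Definition dirac (a : M) : {ffun M -> R} := [ffun w => (w == a)%:R].

Lemma sum_dirac (P : pred M) a : \sum_(j | P j) dirac a j = (P a)%:R.
Proof.
rewrite (eq_bigr (fun j => (j == a)%:R)) => [|j _]; last by rewrite ffunE.
case Pa: (P a).
  by rewrite (bigD1 a) //= eqxx big1 ?addr0 // => j /andP[_ /negbTE ->].
by rewrite big1 // => j Pj; case: eqVneq Pj => // ->; rewrite Pa.
Qed.

Lemma mass_dirac a A : mass (dirac a) A = (a \in A)%:R.
Proof. exact: sum_dirac. Qed.

Lemma dirac_inj : injective dirac.
Proof.
by move=> a b /ffunP/(_ a); rewrite !ffunE eqxx; case: eqVneq => // _ /eqP; rewrite eqr_nat.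
Qed.

Lemma lottery_dirac x a : is_lottery x -> x a = 1 -> x = dirac a.
Proof.
move=> [x_ge0 x_sum] xa; move: x_sum; rewrite (bigD1 a) //= xa -[X in _ = X](addr0 1).
move=> /addrI /(psumr_eq0P (fun j _ => x_ge0 j)) x0; apply/ffunP => w; rewrite ffunE.
by case: eqVneq => [-> | /x0].
Qed.

Lemma fosd_dirac r a b : is_pref r -> fosd r (dirac a) (dirac b) <-> rel_of r a b.
Proof.
move=> r_pref; split=> [/(_ b) | ab c]; rewrite !sum_dirac ler_nat.
  by rewrite pref_refl //; case: (rel_of r a b).
case: r_pref => _ tr; case bc: (rel_of r b c) => //.
by rewrite (tr _ _ _ ab bc).
Qed.

End Lotteries.

Section DeterministicMechanism.
Variables (R : realFieldType) (M : finType) (phi : prel M -> {ffun M -> R}).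
Implicit Types (c r : prel M) (A B : {set M}) (a b x : M).

Definition dirac_strategyproof : Prop := forall r r' a b, is_pref r -> is_pref r' ->
  phi r = dirac a -> phi r' = dirac b -> rel_of r a b.

Definition dirac_separation_monotonic : Prop := forall r r' C1 C2 a b,
  separation r r' C1 C2 -> phi r = dirac a -> phi r' = dirac b ->
  [/\ indiff r a b, a \in C1 -> b \in C1 & b \in C2 -> a \in C2].

Lemma strategyproof_monotonic :
  dirac_strategyproof -> dirac_separation_monotonic.
Proof.
move=> sp r r' C1 C2 a b sep ra r'b.
have r_pref : is_pref r by case: sep.
have r'_pref := separation_pref sep.
apply: separation_indiff_mem sep (sp _ _ _ _ r_pref r'_pref ra r'b) _.
exact: sp r'_pref r_pref r'b ra.
Qed.

Hypotheses (phi_mech : is_mechanism phi) (phi_det : deterministic phi).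

Lemma phi_dirac r : is_pref r -> exists a, phi r = dirac a.
Proof.
move=> r_pref; have [a ra] := phi_det r_pref.
by exists a; apply: lottery_dirac ra; apply: phi_mech.
Qed.

Lemma strategyproof_dirac : strategyproof phi <-> dirac_strategyproof.
Proof.
split=> [sp r r' a b r_pref r'_pref ra r'b | sp r r' r_pref r'_pref].
  by have := sp r r' r_pref r'_pref; rewrite ra r'b => /(fosd_dirac _ _ r_pref).
have [a ra] := phi_dirac r_pref; have [b r'b] := phi_dirac r'_pref.
by rewrite ra r'b; apply/fosd_dirac => //; apply: sp r'b.
Qed.

Lemma separation_monotonic_dirac :
  separation_monotonic phi <-> dirac_separation_monotonic.
Proof.
split=> [sm r r' C1 C2 a b sep ra r'b | sm r r' C1 C2 sep].
  have [r_pref C_class _ _ _] := sep.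
  have [[] ] := sm _ _ _ _ sep; rewrite ra r'b !mass_dirac !ler_nat => le1 le2 direct.
  have mono1 : a \in C1 -> b \in C1 by case: (a \in C1) (b \in C1) le1 => [] [].
  have mono2 : b \in C2 -> a \in C2 by case: (a \in C2) (b \in C2) le2 => [] [].
  split=> //; apply/negPn/negP => ab.
  have [] := direct.
    exists [set y | indiff r a y]; split; first by exists a.
    by rewrite !mass_dirac !inE indiff_refl // (negbTE ab) eqr_nat.
  rewrite !eqr_nat => ne1 ne2.
  have bC1 : b \in C1.
    by move: ne1 mono1; case: (a \in C1); case: (b \in C1) => // _ /(_ isT).
  have aC2 : a \in C2.
    by move: ne2 mono2; case: (a \in C2); case: (b \in C2) => // _ /(_ isT).
  have aC : a \in C1 :|: C2 by rewrite inE aC2 orbT.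
  by case/negP: ab; rewrite -(class_mem _ r_pref C_class aC) inE bC1.
have r_pref : is_pref r by case: sep.
have [a ra] := phi_dirac r_pref; have [b r'b] := phi_dirac (separation_pref sep).
have [ab mono1 mono2] := sm _ _ _ _ _ _ sep ra r'b.
rewrite ra r'b !mass_dirac !ler_nat; split.
  by split; [case: (a \in C1) (b \in C1) mono1 | case: (a \in C2) (b \in C2) mono2]
     => [] [] // /(_ isT).
case=> C [C_class]; rewrite !mass_dirac (class_indiff_mem r_pref C_class ab).
by rewrite eqxx.
Qed.

Section Monotonic.
Hypothesis phi_sm : dirac_separation_monotonic.

Lemma separate_dirac_mem c C1 C2 a b : is_pref c -> indiff_class c (C1 :|: C2) ->
  [disjoint C1 & C2] -> phi c = dirac a -> phi (separate c C1 C2) = dirac b ->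
  (a \in C1 -> b \in C1) /\ (b \in C2 -> a \in C2).
Proof.
move=> c_pref C_class C_dis ca cb.
have [C0 | ] := boolP ((C1 == set0) || (C2 == set0)).
  by move: cb; rewrite separate_id // ca => /dirac_inj ->.
rewrite negb_or => C_ne; have sep : separation c (separate c C1 C2) C1 C2 by split.
by have [_ ? ?] := phi_sm sep ca cb.
Qed.

Lemma refine_indiff c c' a b : is_pref c -> is_pref c' -> subrel (rel_of c') (rel_of c) ->
  phi c = dirac a -> phi c' = dirac b -> indiff c a b.
Proof.
move=> + c'_pref + + c'b; have [n] := ubnP #|[set p | c p]|.
elim: n c a => // n IH c a lt_c c_pref c'c ca.
have [c_eq | neq] := eqVneq c c'.
  by move: ca; rewrite c_eq c'b => /dirac_inj ->; apply: indiff_refl.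
have [d [C1 [C2 [sep c'd]]]] := subrel_separation c_pref c'_pref c'c neq.
have d_pref := separation_pref sep.
have [e de] := phi_dirac d_pref.
have [ae _ _] := phi_sm sep ca de.
have eb := IH d e (leq_trans (separation_card sep) lt_c) d_pref c'd de.
exact: indiff_trans c_pref ae (subrel_indiff (separation_subrel sep) eb).
Qed.

Lemma prefer_refine_mem A c1 c2 a1 a2 : is_pref c1 -> is_pref c2 ->
  subrel (rel_of c1) (rel_of (prefer A)) -> subrel (rel_of c2) (rel_of (prefer A)) ->
  phi c1 = dirac a1 -> phi c2 = dirac a2 -> (a1 \in A) = (a2 \in A).
Proof.
move=> c1_pref c2_pref c1A c2A ca1 ca2.
have [m Am] := phi_dirac (prefer_pref A).
have := refine_indiff (prefer_pref A) c1_pref c1A Am ca1.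
have := refine_indiff (prefer_pref A) c2_pref c2A Am ca2.
by rewrite !indiff_prefer => /eqP <- /eqP <-.
Qed.

Lemma isolated_dirac_upper c x : is_pref c -> (forall y, indiff c x y -> y = x) ->
  phi c = dirac x -> phi (prefer [set y | rel_of c y x]) = dirac x.
Proof.
move=> c_pref x_iso cx; set B := [set y | rel_of c y x].
have xB : x \in B by rewrite inE pref_refl.
have B_class : indiff_class (prefer B) ((B :\ x) :|: [set x]).
  by rewrite setUC; apply: prefer_class_split.
have B_dis : [disjoint B :\ x & [set x]] by rewrite disjoint_sym disjoints1 setD11.
have mid_pref := separate_pref (prefer_pref B) B_class B_dis.
have [m mid_m] := phi_dirac mid_pref.
have mx : m = x.
  have := refine_indiff mid_pref c_pref (subrel_isolated c_pref x_iso) mid_m cx.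
  rewrite indiff_sym => /(separate_indiff_mem (prefer_pref B) B_class B_dis).
  by rewrite setUC setD1K // xB !inE eqxx => /(_ isT) [_ /esym/eqP].
have [b Bb] := phi_dirac (prefer_pref B).
have [_] := separate_dirac_mem (prefer_pref B) B_class B_dis Bb mid_m.
by rewrite mx !inE eqxx Bb => /(_ isT)/eqP ->.
Qed.

Lemma prefer1_dirac B x : x \in B -> phi (prefer B) = dirac x ->
  phi (prefer [set x]) = dirac x.
Proof.
move=> xB Bx; have B_class := prefer_class_split xB.
have B_dis : [disjoint [set x] & B :\ x] by rewrite disjoints1 setD11.
have raise_pref := separate_pref (prefer_pref B) B_class B_dis.
have [u raise_u] := phi_dirac raise_pref.
have ux : u = x.
  have [+ _] := separate_dirac_mem (prefer_pref B) B_class B_dis Bx raise_u.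
  by rewrite !inE eqxx => /(_ isT)/eqP.
have [t top_t] := phi_dirac (prefer_pref [set x]).
have := prefer_refine_mem raise_pref (prefer_pref _) (subrel_prefer1 xB) (fun _ _ => id)
  raise_u top_t.
by rewrite ux top_t !inE eqxx => /esym/eqP ->.
Qed.

Lemma prefer1_of_dirac q x : is_pref q -> phi q = dirac x -> phi (prefer [set x]) = dirac x.
Proof.
move=> q_pref qx; pose Cx := [set y | indiff q x y].
have xCx : x \in Cx by rewrite inE indiff_refl.
have Cx_class : indiff_class q ([set x] :|: (Cx :\ x)) by rewrite setD1K //; exists x.
have Cx_dis : [disjoint [set x] & Cx :\ x] by rewrite disjoints1 setD11.
pose q' := separate q [set x] (Cx :\ x).
have q'_pref : is_pref q' := separate_pref q_pref Cx_class Cx_dis.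
have [x' q'x'] := phi_dirac q'_pref.
have {x' q'x'} q'x : phi q' = dirac x.
  have [+ _] := separate_dirac_mem q_pref Cx_class Cx_dis qx q'x'.
  by rewrite !inE eqxx q'x' => /(_ isT)/eqP ->.
have x_iso y : indiff q' x y -> y = x.
  move=> /(separate_indiff_mem q_pref Cx_class Cx_dis).
  by rewrite setD1K // xCx => /(_ isT) [/esym]; rewrite !inE eqxx => /eqP.
by apply: prefer1_dirac (isolated_dirac_upper q'_pref x_iso q'x); rewrite inE pref_refl.
Qed.

Lemma monotonic_strategyproof : dirac_strategyproof.
Proof.
move=> r q a x r_pref q_pref ra qx; pose U := [set y | rel_of r y x].
have xU : x \in U by rewrite inE pref_refl.
have U_dis : [disjoint [set x] & U :\ x] by rewrite disjoints1 setD11.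
have s_pref := separate_pref (prefer_pref U) (prefer_class_split xU) U_dis.
have [t st] := phi_dirac s_pref.
have tx : t = x.
  have := prefer_refine_mem s_pref (prefer_pref _) (subrel_prefer1 xU) (fun _ _ => id)
    st (prefer1_of_dirac q_pref qx).
  by rewrite !inE eqxx => /eqP.
have := prefer_refine_mem r_pref s_pref (subrel_prefer_upper x r_pref)
  (separate_subrel (prefer_pref U) (prefer_class_split xU)) ra st.
by rewrite tx xU inE.
Qed.

End Monotonic.

End DeterministicMechanism.

Theorem corollary1 (R : realFieldType) (M : finType)
    (phi : prel M -> {ffun M -> R}) :
  is_mechanism phi -> deterministic phi ->
  (strategyproof phi <-> separation_monotonic phi).
Proof.
move=> phi_mech phi_det.
have [sp_dirac dirac_sp] := strategyproof_dirac phi_mech phi_det.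
have [sm_dirac dirac_sm] := separation_monotonic_dirac phi_mech phi_det.
split=> [/sp_dirac/strategyproof_monotonic/dirac_sm // | /sm_dirac sm].
exact/dirac_sp/(monotonic_strategyproof phi_mech phi_det).
Qed.
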